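(* Let $\gamma\in(0,1)$ and $c\ge 0$. Define the deterministic sequence $\bar v^0=0$ and, for $n\ge 1$, $$\hat v^n = c+\gamma \bar v^{n-1},\qquad \bar v^n=\Big(1-\tfrac1n\Big)\bar v^{n-1}+\tfrac1n \hat v^n .$$ Let $b=\frac{\gamma^2+\gamma-1}{\gamma}$. Then for all $n=1,2,\dots$, $$\bar v^n\ \le\ \frac{c}{1-\gamma}\Big[1-b\,n^{-(1-\gamma)}-\frac{1-\gamma}{\gamma}\cdot\frac1n\Big].$$
   Context: This is approximate value iteration for a single-state, single-action problem with deterministic one-period reward $c$, discount factor $\gamma$, initial approximation $0$, and stepsize $\alpha_{n-1}=1/n$. *)

From Stdlib Require Import Reals.
Open Scope R_scope.

Fixpoint vbar (c gamma : R) (n : nat) : R :=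
  match n with
  | O => 0
  | S m =>
      let prev := vbar c gamma m in
      let vhat := c + gamma * prev in
      (1 - 1 / INR (S m)) * prev + (1 / INR (S m)) * vhat
  end.

(* Write [e_n = c/(1-gamma) - vbar_n] for the distance to the fixed point.  The recursion
   contracts it exactly: [e_(n+1) = e_n (1 - (1-gamma)/(n+1))], and [e_1 = c gamma].  The
   claim is [e_n >= c/(1-gamma) f(n)] with [f(x) = b x^-(1-gamma) + (1-gamma)/(gamma x)],
   [f(1) = gamma], so by induction it suffices that [f] contracts at least as fast:
   [f(N+1) <= f(N) (1 - (1-gamma)/(N+1))].  Writing [N^-(1-gamma) = (N+1)^-(1-gamma) t],
   the two Bernoulli inequalities for real exponents squeeze [t] between
   [1 + (1-gamma)/(N+1)] and [1 + (1-gamma)/N]; the lower bound handles [b >= 0], the upper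
   bound [b < 0], and in both cases the remaining polynomial inequality holds because
   [b gamma = gamma^2 + gamma - 1 > -1] and [b < 1]. *)
From Stdlib Require Import Reals Lra Psatz.
Open Scope R_scope.

Lemma ln_le_sub_1 (x : R) : 0 < x -> ln x <= x - 1.
Proof.
  intros hx.
  pose proof (exp_ineq1_le (ln x)) as h.
  rewrite exp_ln in h; lra.
Qed.

Lemma Rpower_ge_bernoulli (x a : R) : 0 < x -> a <= 0 -> 1 + a * (x - 1) <= Rpower x a.
Proof.
  intros hx ha.
  unfold Rpower.
  pose proof (exp_ineq1_le (a * ln x)).
  pose proof (ln_le_sub_1 x hx).
  nra.
Qed.

Lemma Rpower_le_bernoulli (x a : R) :
  0 < x -> 0 <= a <= 1 -> Rpower x a <= 1 + a * (x - 1).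
Proof.
  intros hx ha.
  unfold Rpower.
  set (L := ln x); set (m := a * L).
  (* Tangent lines of [exp] at [m], evaluated at [L] and at [0], averaged with weights [a], [1-a]. *)
  assert (tangent_L : exp m * (1 + (L - m)) <= x).
  { rewrite <- (exp_ln x hx); fold L.
    replace (exp L) with (exp m * exp (L - m)) by (rewrite <- exp_plus; f_equal; ring).
    apply Rmult_le_compat_l; [left; apply exp_pos | apply exp_ineq1_le]. }
  assert (tangent_0 : exp m * (1 - m) <= 1).
  { replace 1 with (exp m * exp (- m)) at 2
      by (rewrite <- exp_plus, Rplus_opp_r; apply exp_0).
    apply Rmult_le_compat_l; [left; apply exp_pos | apply exp_ineq1_le]. }
  replace (exp m) with (a * (exp m * (1 + (L - m))) + (1 - a) * (exp m * (1 - m)))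
    by (unfold m; ring).
  nra.
Qed.

Lemma Rpower_Rinv (x y : R) : 0 < x -> Rpower (/ x) y = Rpower x (- y).
Proof. intros hx; unfold Rpower; rewrite ln_Rinv by exact hx; f_equal; ring. Qed.

Lemma vbar_gap_S (c g : R) (n : nat) : g <> 1 ->
  c / (1 - g) - vbar c g (S n) =
    (c / (1 - g) - vbar c g n) * (1 - (1 - g) / INR (S n)).
Proof.
  intros hg.
  assert (0 < INR (S n)) by apply lt_0_INR, Nat.lt_0_succ.
  cbn [vbar]; field; split; lra.
Qed.

Definition gap_bound (g x : R) : R :=
  (g ^ 2 + g - 1) / g * Rpower x (- (1 - g)) + (1 - g) / g * (1 / x).

Lemma gap_bound_1 (g : R) : 0 < g -> gap_bound g 1 = g.
Proof.
  intros hg; unfold gap_bound, Rpower.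
  rewrite ln_1, Rmult_0_r, exp_0.
  field; lra.
Qed.

Section GapContraction.

Variables g N s t b : R.
Hypotheses (hg0 : 0 < g) (hg1 : g < 1) (hN : 1 <= N) (hs0 : 0 < s) (hs1 : s <= 1).
Hypothesis hb : b * g = g ^ 2 + g - 1.
Hypotheses (ht_lo : N + 2 - g <= t * (N + 1)) (ht_hi : t * N <= N + 1 - g).

Lemma gap_contraction_nonneg_b : 0 <= b ->
  0 <= b * s * (t * (N + g) - (N + 1)) * N + (1 - g).
Proof.
  intros hb0.
  set (u := t * (N + g) - (N + 1)).
  assert (hu : - (1 - g) ^ 2 <= u * (N + 1)).
  { assert ((N + 2 - g) * (N + g) <= t * (N + 1) * (N + g)) by nra.
    unfold u; nra. }
  assert (hbs : 0 <= b * s <= 1) by nra.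
  assert (hbsN : - ((1 - g) ^ 2 * N) <= b * s * N * (u * (N + 1))).
  { assert (0 <= b * s * N * (u * (N + 1) + (1 - g) ^ 2))
      by (apply Rmult_le_pos; [apply Rmult_le_pos|]; lra).
    assert (0 <= (1 - g) ^ 2 * N * (1 - b * s))
      by (apply Rmult_le_pos; [apply Rmult_le_pos; [apply pow2_ge_0|]|]; lra).
    nra. }
  assert (0 <= (1 - g) * (g * N + 1)) by (apply Rmult_le_pos; nra).
  assert (0 <= (b * s * u * N + (1 - g)) * (N + 1)) by nra.
  nra.
Qed.

Lemma gap_contraction_neg_b : b < 0 ->
  0 <= b * s * (t * (N + g) - (N + 1)) * N + (1 - g).
Proof.
  intros hb0.
  set (u := t * (N + g) - (N + 1)).
  assert (huN : u * N <= g * (1 - g)).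
  { assert (t * N * (N + g) <= (N + 1 - g) * (N + g)) by nra.
    unfold u; nra. }
  assert (b <= b * s) by nra.
  assert (b * s * (g * (1 - g)) <= b * s * (u * N))
    by (apply Rmult_le_compat_neg_l; nra).
  assert (b * (g * (1 - g)) <= b * s * (g * (1 - g)))
    by (apply Rmult_le_compat_r; [apply Rmult_le_pos|]; lra).
  nra.
Qed.

End GapContraction.

Lemma Rpower_succ_ratio_ge (N a : R) : 0 < N -> 0 <= a ->
  N + 1 + a <= Rpower (N / (N + 1)) (- a) * (N + 1).
Proof.
  intros hN ha.
  replace (N + 1 + a) with ((1 + - a * (N / (N + 1) - 1)) * (N + 1)) by (field; lra).
  apply Rmult_le_compat_r; [lra|].
  apply Rpower_ge_bernoulli; [apply Rdiv_lt_0_compat|]; lra.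
Qed.

Lemma Rpower_succ_ratio_le (N a : R) : 0 < N -> 0 <= a <= 1 ->
  Rpower (N / (N + 1)) (- a) * N <= N + a.
Proof.
  intros hN ha.
  replace (N / (N + 1)) with (/ ((N + 1) / N)) by (field; lra).
  rewrite Rpower_Rinv, Ropp_involutive by (apply Rdiv_lt_0_compat; lra).
  replace (N + a) with ((1 + a * ((N + 1) / N - 1)) * N) by (field; lra).
  apply Rmult_le_compat_r; [lra|].
  apply Rpower_le_bernoulli; [apply Rdiv_lt_0_compat|]; lra.
Qed.

Lemma gap_bound_S (g N : R) : 0 < g -> g < 1 -> 1 <= N ->
  gap_bound g (N + 1) <= gap_bound g N * (1 - (1 - g) / (N + 1)).
Proof.
  intros hg0 hg1 hN.
  set (b := (g ^ 2 + g - 1) / g).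
  set (s := Rpower (N + 1) (- (1 - g))).
  set (t := Rpower (N / (N + 1)) (- (1 - g))).
  assert (hb : b * g = g ^ 2 + g - 1) by (unfold b; field; lra).
  assert (hs0 : 0 < s) by apply exp_pos.
  assert (hs1 : s <= 1).
  { rewrite <- (Rpower_O (N + 1)) by lra.
    apply Rle_Rpower; lra. }
  assert (hst : Rpower N (- (1 - g)) = s * t).
  { unfold s, t; rewrite Rpower_mult_distr by (try apply Rdiv_lt_0_compat; lra).
    f_equal; field; lra. }
  assert (ht_lo : N + 2 - g <= t * (N + 1))
    by (pose proof (Rpower_succ_ratio_ge N (1 - g) ltac:(lra) ltac:(lra)) as h; fold t in h; lra).
  assert (ht_hi : t * N <= N + 1 - g)
    by (pose proof (Rpower_succ_ratio_le N (1 - g) ltac:(lra) ltac:(lra)) as h; fold t in h; lra).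
  assert (hcore : 0 <= b * s * (t * (N + g) - (N + 1)) * N + (1 - g)).
  { destruct (Rle_lt_dec 0 b).
    - now apply (gap_contraction_nonneg_b g N s t b).
    - now apply (gap_contraction_neg_b g N s t b). }
  assert (hdiff : gap_bound g N * (1 - (1 - g) / (N + 1)) - gap_bound g (N + 1) =
                  (b * s * (t * (N + g) - (N + 1)) * N + (1 - g)) / (N * (N + 1))).
  { unfold gap_bound; fold b s; rewrite hst; field; lra. }
  assert (0 <= (b * s * (t * (N + g) - (N + 1)) * N + (1 - g)) / (N * (N + 1)))
    by (apply Rle_mult_inv_pos; [exact hcore | nra]).
  lra.
Qed.

Lemma vbar_gap_ge (c g : R) (n : nat) : 0 < g -> g < 1 -> 0 <= c -> (1 <= n)%nat ->
  c / (1 - g) * gap_bound g (INR n) <= c / (1 - g) - vbar c g n.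
Proof.
  intros hg0 hg1 hc hn.
  assert (hA : 0 <= c / (1 - g)) by (apply Rle_mult_inv_pos; lra).
  induction hn as [|m hm IH].
  - rewrite gap_bound_1 by exact hg0.
    cbn [vbar INR]; right; field; lra.
  - rewrite vbar_gap_S, S_INR by lra.
    assert (hN : 1 <= INR m) by (apply (le_INR 1); exact hm).
    assert (hfactor : 0 <= 1 - (1 - g) / (INR m + 1)).
    { replace (1 - (1 - g) / (INR m + 1)) with ((INR m + g) / (INR m + 1)) by (field; lra).
      apply Rle_mult_inv_pos; lra. }
    apply Rle_trans with (c / (1 - g) * gap_bound g (INR m) * (1 - (1 - g) / (INR m + 1))).
    + rewrite Rmult_assoc; apply Rmult_le_compat_l; [exact hA|].
      now apply gap_bound_S.
    + now apply Rmult_le_compat_r.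
Qed.

Theorem theorem2 (gamma c : R) (hg0 : 0 < gamma) (hg1 : gamma < 1) (hc : 0 <= c)
  (n : nat) (hn : (1 <= n)%nat) :
  let b := (gamma ^ 2 + gamma - 1) / gamma in
  vbar c gamma n <=
    c / (1 - gamma) *
      (1 - b * Rpower (INR n) (- (1 - gamma)) - (1 - gamma) / gamma * (1 / INR n)).
Proof.
  intros b.
  pose proof (vbar_gap_ge c gamma n hg0 hg1 hc hn) as hgap.
  unfold gap_bound in hgap; fold b in hgap.
  lra.
Qed.
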